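(* Let $S\subseteq\mathbb{S}$ be nonempty with $1\notin S$, and let $i^*=\min S$ be the highest-quality product in $S$. Then $\overline{re}\big((S\setminus\{i^*\})\cup\{1\}\big)\ge\overline{re}(S)$. In particular, there is a revenue-maximizing displayed set that contains product $1$.
   Context: Market model: sellers $\mathbb{S}=\{1,\dots,n\}$, product qualities $\theta_1\ge\theta_2\ge\dots\ge\theta_n\ge0$. For displayed set $S$ and prices $p_i\ge0$: $a_i=e^{\theta_i-p_i}$, MNL demand $q_i=a_i/(1+\sum_{j\in S}a_j)$; sellers in $S$ play the Bertrand game (seller $i$ chooses $p_i\ge0$ to maximize $p_iq_i$). $V:(0,\infty)\to(0,1)$: $V(x)=$ the unique $v\in(0,1)$ with $v\exp(v/(1-v))=x$. For nonempty $S$, $\bar q_0(S)\in(0,1)$ is the unique solution of $\sum_{i\in S}V(\bar q_0e^{\theta_i-1})=1-\bar q_0$, and $\bar q_i(S)=V(\bar q_0(S)e^{\theta_i-1})$ are the equilibrium demands. The equilibrium revenue is $\overline{re}(S)=\sum_{i\in S}\frac{\bar q_i(S)}{1-\bar q_i(S)}$, with $\overline{re}(\emptyset)=0$. *)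

From Stdlib Require Import Reals Lra Lia List Arith ClassicalEpsilon.
Import ListNotations.
Open Scope R_scope.

Definition lsum (f : nat -> R) (S : list nat) : R :=
  fold_right (fun i acc => f i + acc) 0 S.

Definition V (x : R) : R :=
  epsilon (inhabits 0) (fun v => 0 < v < 1 /\ v * exp (v / (1 - v)) = x).

Definition qbar0 (theta : nat -> R) (S : list nat) : R :=
  epsilon (inhabits 0)
    (fun q => 0 < q < 1 /\
       lsum (fun i => V (q * exp (theta i - 1))) S = 1 - q).

Definition qbar (theta : nat -> R) (S : list nat) (i : nat) : R :=
  V (qbar0 theta S * exp (theta i - 1)).

Definition re (theta : nat -> R) (S : list nat) : R :=
  match S with
  | [] => 0
  | _ => lsum (fun i => qbar theta S i / (1 - qbar theta S i)) S
  end.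

Definition displayed (n : nat) (S : list nat) : Prop :=
  NoDup S /\ forall i, In i S -> (1 <= i <= n)%nat.

(* Write [odds x = x/(1-x)]; the revenue of a displayed set is the sum of the
   odds of the equilibrium demands, and [V] is the inverse of the increasing
   map [Vinv v = v * exp (odds v)] on [0,1).  Let [S' = 1 :: S \ {k}] where [k]
   is the best product of [S], with outside shares [q = qbar0 S], [q' = qbar0 S'].
   1. [V] is well defined, increasing, bounded by the identity and continuous;
      hence the outside share [qbar0 S] solving the market-clearing equation
      exists (intermediate value theorem).
   2. Comparing the two clearing equations gives [q' <= q]; hence every
      product of [S \ {k}] loses demand, while the demand of the swapped-in
      product exceeds the old top demand by at least the total amount lost.
   3. Since [odds] is convex and the losers' demands lie below the old top
      demand [a], the loss in odds is at most (total demand lost)/(1-a)^2, and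
      the gain of the new top product is at least that much ([odds_exchange]).
   4. Displayed sets are finitely many, so a revenue maximizer exists; if it
      misses product 1, the exchange of step 3 yields one that contains it. *)

From Stdlib Require Import Reals Lra Lia List Arith ClassicalEpsilon Classical Ranalysis5.
Import ListNotations.
Open Scope R_scope.

Definition odds (x : R) : R := x / (1 - x).

(* [V] is, by definition, the inverse of this map on (0,1). *)
Definition Vinv (v : R) : R := v * exp (odds v).

Lemma exp_monotone x y : x <= y -> exp x <= exp y.
Proof.
  intros Hxy. destruct (Rle_lt_or_eq_dec _ _ Hxy) as [Hlt | ->].
  - left. now apply exp_increasing.
  - lra.
Qed.

Lemma odds_lt u v : 0 <= u -> u < v -> v < 1 -> odds u < odds v.
Proof.
  intros. unfold odds.
  replace (u / (1 - u)) with (/ (1 - u) - 1) by (field; lra).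
  replace (v / (1 - v)) with (/ (1 - v) - 1) by (field; lra).
  assert (/ (1 - u) < / (1 - v)) by (apply Rinv_lt_contravar; nra).
  lra.
Qed.

Lemma odds_nonneg x : 0 <= x < 1 -> 0 <= odds x.
Proof. intros. unfold odds. apply Rle_mult_inv_pos; lra. Qed.

Lemma Vinv_lt u v : 0 <= u -> u < v -> v < 1 -> Vinv u < Vinv v.
Proof.
  intros. unfold Vinv.
  assert (exp (odds u) < exp (odds v)) by (apply exp_increasing, odds_lt; lra).
  pose proof (exp_pos (odds u)). nra.
Qed.

Lemma Vinv_0 : Vinv 0 = 0.
Proof. unfold Vinv. ring. Qed.

Lemma Vinv_continuous v : v < 1 -> continuity_pt Vinv v.
Proof.
  intros Hv. unfold Vinv, odds.
  apply continuity_pt_mult; [apply derivable_continuous_pt, derivable_pt_id |].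
  change (fun x => exp (x / (1 - x))) with (comp exp (fun x => x / (1 - x))).
  apply continuity_pt_comp; [| apply derivable_continuous_pt, derivable_pt_exp].
  apply continuity_pt_div; [apply derivable_continuous_pt, derivable_pt_id | | lra].
  apply continuity_pt_minus; [now apply continuity_pt_const |].
  apply derivable_continuous_pt, derivable_pt_id.
Qed.

(* [Vinv] maps (0,1) onto (0,oo): at [c] with [odds c = x+1] it exceeds [x]. *)
Lemma Vinv_onto x : 0 < x -> exists v, 0 < v < 1 /\ Vinv v = x.
Proof.
  intros Hx. set (c := (x + 1) / (x + 2)).
  assert (Hc : 0 < c < 1).
  { unfold c; split; [apply Rdiv_lt_0_compat; lra |].
    apply Rmult_lt_reg_r with (x + 2); [lra |]. field_simplify; lra. }
  assert (Hoddsc : odds c = x + 1) by (unfold odds, c; field; lra).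
  destruct (IVT_interv (fun v => Vinv v - x) 0 c) as [z [Hz Hvz]].
  - intros a Ha. apply continuity_pt_minus; [apply Vinv_continuous; lra |].
    now apply continuity_pt_const.
  - lra.
  - rewrite Vinv_0; lra.
  - unfold Vinv. rewrite Hoddsc. pose proof (exp_ineq1 (x + 1)).
    assert (c * (x + 2) = x + 1) by (unfold c; field; lra). nra.
  - exists z. assert (z <> 0) by (intros ->; rewrite Vinv_0 in Hvz; lra).
    split; lra.
Qed.

Lemma V_spec x : 0 < x -> 0 < V x < 1 /\ Vinv (V x) = x.
Proof. intros Hx. unfold V. apply epsilon_spec, Vinv_onto, Hx. Qed.

Lemma V_Vinv v : 0 < v < 1 -> V (Vinv v) = v.
Proof.
  intros Hv. assert (Hpos : 0 < Vinv v) by (rewrite <- Vinv_0; apply Vinv_lt; lra).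
  destruct (V_spec _ Hpos) as [HV HVinv].
  destruct (Rtotal_order (V (Vinv v)) v) as [Hlt | [Heq | Hgt]]; [| exact Heq |].
  - pose proof (Vinv_lt (V (Vinv v)) v ltac:(lra) Hlt ltac:(lra)). lra.
  - pose proof (Vinv_lt v (V (Vinv v)) ltac:(lra) Hgt ltac:(lra)). lra.
Qed.

Lemma V_monotone x y : 0 < x -> x <= y -> V x <= V y.
Proof.
  intros Hx Hxy. destruct (V_spec x Hx) as [Hbx Ex].
  destruct (V_spec y ltac:(lra)) as [Hby Ey].
  destruct (Rle_dec (V x) (V y)) as [| Hn]; [assumption |].
  pose proof (Vinv_lt (V y) (V x) ltac:(lra) ltac:(lra) ltac:(lra)). lra.
Qed.

(* [Vinv v >= v] on [0,1), so [V] lies below the identity. *)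
Lemma V_le_id x : 0 < x -> V x <= x.
Proof.
  intros Hx. destruct (V_spec x Hx) as [Hb Ex]. unfold Vinv in Ex.
  pose proof (exp_ineq1_le (odds (V x))).
  pose proof (odds_nonneg (V x) ltac:(lra)). nra.
Qed.

(* Continuity of the inverse of the continuous increasing map [Vinv]. *)
Lemma V_continuous x : 0 < x -> continuity_pt V x.
Proof.
  intros Hx. destruct (V_spec x Hx) as [Hv Ev].
  set (lb := V x / 2). set (ub := (1 + V x) / 2).
  assert (Hlb : 0 < Vinv lb) by (rewrite <- Vinv_0; apply Vinv_lt; unfold lb; lra).
  apply (continuity_pt_recip_interv Vinv V lb ub); unfold lb, ub in *.
  - lra.
  - intros u w Hu Huw Hw. apply Vinv_lt; lra.
  - intros y Hy _. exact (proj2 (V_spec y ltac:(lra))).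
  - intros y Hy1 Hy2. rewrite <- (V_Vinv (V x / 2)), <- (V_Vinv ((1 + V x) / 2)) by lra.
    split; apply V_monotone; lra.
  - intros a Ha. apply Vinv_continuous. lra.
  - pose proof (Vinv_lt (V x / 2) (V x) ltac:(lra) ltac:(lra) ltac:(lra)).
    pose proof (Vinv_lt (V x) ((1 + V x) / 2) ltac:(lra) ltac:(lra) ltac:(lra)).
    lra.
Qed.

(** * Demand of a product of quality [t] when the outside share is [q] *)

Definition demand (q t : R) : R := V (q * exp (t - 1)).

Lemma demand_bounds q t : 0 < q -> 0 < demand q t < 1.
Proof. intros. apply V_spec. pose proof (exp_pos (t - 1)). nra. Qed.

Lemma demand_monotone q q' t t' : 0 < q -> q <= q' -> t <= t' ->
  demand q t <= demand q' t'.
Proof.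
  intros. unfold demand. pose proof (exp_pos (t - 1)).
  apply V_monotone; [nra |]. apply Rmult_le_compat; try lra.
  apply exp_monotone. lra.
Qed.

(* Since [Vinv v >= v], demand is at most its linearization. *)
Lemma demand_le q t : 0 < q -> demand q t <= q * exp (t - 1).
Proof. intros. apply V_le_id. pose proof (exp_pos (t - 1)). nra. Qed.

Lemma demand_continuous t q : 0 < q -> continuity_pt (fun y => demand y t) q.
Proof.
  intros Hq. unfold demand.
  change (fun y => V (y * exp (t - 1))) with (comp V (fun y => y * exp (t - 1))).
  apply continuity_pt_comp.
  - apply continuity_pt_mult; [apply derivable_continuous_pt, derivable_pt_id |].
    now apply continuity_pt_const.
  - apply V_continuous. pose proof (exp_pos (t - 1)). nra.
Qed.

Lemma lsum_cons f a L : lsum f (a :: L) = f a + lsum f L.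
Proof. reflexivity. Qed.

Lemma lsum_le f g L : (forall i, In i L -> f i <= g i) -> lsum f L <= lsum g L.
Proof.
  induction L as [| a L IH]; intros H; simpl; [lra |].
  pose proof (H a (or_introl eq_refl)).
  pose proof (IH (fun i Hi => H i (or_intror Hi))). lra.
Qed.

Lemma lsum_nonneg f L : (forall i, In i L -> 0 <= f i) -> 0 <= lsum f L.
Proof.
  induction L as [| a L IH]; intros H; simpl; [lra |].
  pose proof (H a (or_introl eq_refl)).
  pose proof (IH (fun i Hi => H i (or_intror Hi))). lra.
Qed.

Lemma lsum_pos f L : L <> [] -> (forall i, 0 < f i) -> 0 < lsum f L.
Proof.
  destruct L as [| a L]; intros HL Hf; [congruence |].
  rewrite lsum_cons. pose proof (Hf a).
  pose proof (lsum_nonneg f L (fun i _ => Rlt_le _ _ (Hf i))). lra.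
Qed.

Lemma lsum_sub f g L : lsum (fun i => f i - g i) L = lsum f L - lsum g L.
Proof. induction L; simpl; [ring | rewrite IHL; ring]. Qed.

Lemma lsum_mul_r c f L : lsum (fun i => f i * c) L = lsum f L * c.
Proof. induction L; simpl; [ring | rewrite IHL; ring]. Qed.

Lemma lsum_remove f a L : In a L -> NoDup L ->
  lsum f L = f a + lsum f (remove Nat.eq_dec a L).
Proof.
  induction L as [| b L IH]; simpl; intros Hin Hnd; [contradiction |].
  inversion Hnd; subst. destruct (Nat.eq_dec a b) as [-> | Hab].
  - rewrite notin_remove; auto.
  - destruct Hin as [-> | Hin]; [congruence |]. simpl. rewrite IH; auto. ring.
Qed.

Lemma lsum_continuous (F : nat -> R -> R) L x :
  (forall i, continuity_pt (F i) x) -> continuity_pt (fun y => lsum (fun i => F i y) L) x.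
Proof.
  intros HF. induction L as [| a L IH]; simpl.
  - now apply continuity_pt_const.
  - apply (continuity_pt_plus (F a)); auto.
Qed.

(** * The equilibrium outside share *)

(* [q + sum demands - 1] is negative for small [q > 0] (demand <= q e^(t-1))
   and positive at [q = 1], so it vanishes in between. *)
Lemma qbar0_exists theta L : L <> [] -> exists q, 0 < q < 1 /\
  lsum (fun i => demand q (theta i)) L = 1 - q.
Proof.
  intros HL. set (s := lsum (fun i => exp (theta i - 1)) L).
  assert (Hs : 0 <= s) by (apply lsum_nonneg; intros; apply Rlt_le, exp_pos).
  set (a := / (2 + 2 * s)).
  assert (Ha : 0 < a) by (apply Rinv_0_lt_compat; lra).
  assert (Has : a + a * s < 1).
  { unfold a. replace (/ (2 + 2 * s) + / (2 + 2 * s) * s) with (/ 2) by (field; lra). lra. }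
  assert (Hsmall : lsum (fun i => demand a (theta i)) L <= a * s).
  { unfold s. rewrite Rmult_comm, <- lsum_mul_r.
    apply lsum_le. intros i _. rewrite Rmult_comm. now apply demand_le. }
  assert (Hone : 0 < lsum (fun i => demand 1 (theta i)) L)
    by (apply lsum_pos; [assumption | intros; apply demand_bounds; lra]).
  destruct (IVT_interv (fun q => q + lsum (fun i => demand q (theta i)) L - 1) a 1)
    as [z [Hz Ez]].
  - intros b Hb. apply continuity_pt_minus; [| now apply continuity_pt_const].
    apply continuity_pt_plus; [apply derivable_continuous_pt, derivable_pt_id |].
    apply (lsum_continuous (fun i y => demand y (theta i))).
    intros i. apply demand_continuous. lra.
  - nra.
  - lra.
  - lra.
  - exists z. assert (z <> 1) by (intros ->; lra). split; lra.
Qed.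

Lemma qbar0_spec theta L : L <> [] -> 0 < qbar0 theta L < 1 /\
  lsum (fun i => demand (qbar0 theta L) (theta i)) L = 1 - qbar0 theta L.
Proof. intros HL. unfold qbar0. apply epsilon_spec, qbar0_exists, HL. Qed.

Lemma re_nonempty theta S : S <> [] ->
  re theta S = lsum (fun i => odds (demand (qbar0 theta S) (theta i))) S.
Proof. destruct S; [congruence | reflexivity]. Qed.

Lemma re_nonneg theta S : 0 <= re theta S.
Proof.
  destruct S as [| a L]; [simpl; lra |].
  rewrite re_nonempty by discriminate.
  destruct (qbar0_spec theta (a :: L) ltac:(discriminate)) as [Hq _].
  apply lsum_nonneg. intros i _. apply odds_nonneg.
  pose proof (demand_bounds _ (theta i) (proj1 Hq)). lra.
Qed.

(** * The exchange argument *)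

(* Chord slopes of the convex function [odds] on [0,1). *)
Lemma odds_sub b b' : b < 1 -> b' < 1 ->
  odds b - odds b' = (b - b') / ((1 - b) * (1 - b')).
Proof. intros. unfold odds. field. lra. Qed.

Lemma odds_sub_le a b b' : b' <= b -> b <= a -> a < 1 ->
  odds b - odds b' <= (b - b') / ((1 - a) * (1 - a)).
Proof.
  intros. rewrite odds_sub by lra. unfold Rdiv.
  apply Rmult_le_compat_l; [lra |]. apply Rinv_le_contravar; nra.
Qed.

Lemma odds_sub_ge a a' : a <= a' -> a' < 1 ->
  (a' - a) / ((1 - a) * (1 - a)) <= odds a' - odds a.
Proof.
  intros. rewrite odds_sub by lra. unfold Rdiv.
  apply Rmult_le_compat_l; [lra |]. apply Rinv_le_contravar; nra.
Qed.

Lemma odds_exchange a a' (f f' : nat -> R) L :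
  a <= a' -> a' < 1 ->
  (forall j, In j L -> f' j <= f j <= a) ->
  lsum f L - lsum f' L <= a' - a ->
  odds a + lsum (fun j => odds (f j)) L <= odds a' + lsum (fun j => odds (f' j)) L.
Proof.
  intros Haa' Ha' Hf Hsum.
  set (K := / ((1 - a) * (1 - a))).
  assert (HK : 0 < K) by (apply Rinv_0_lt_compat; nra).
  assert (Hgain : (a' - a) * K <= odds a' - odds a) by now apply odds_sub_ge.
  assert (Hloss : lsum (fun j => odds (f j) - odds (f' j)) L
                  <= lsum (fun j => (f j - f' j) * K) L).
  { apply lsum_le. intros j Hj. destruct (Hf j Hj). apply odds_sub_le; lra. }
  rewrite lsum_sub, lsum_mul_r, lsum_sub in Hloss.
  assert ((lsum f L - lsum f' L) * K <= (a' - a) * K) by (apply Rmult_le_compat_r; lra).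
  lra.
Qed.

(* Swapping [k] for a product [m] of at least its quality lowers the
   outside share: otherwise every demand would rise and the clearing
   equation could not hold. *)
Lemma qbar0_exchange theta S k m : NoDup S -> In k S -> theta k <= theta m ->
  qbar0 theta (m :: remove Nat.eq_dec k S) <= qbar0 theta S.
Proof.
  intros Hnd Hk Hkm. set (R0 := remove Nat.eq_dec k S).
  destruct (qbar0_spec theta S ltac:(intros ->; contradiction)) as [Hq Eq].
  destruct (qbar0_spec theta (m :: R0) ltac:(discriminate)) as [Hq' Eq'].
  set (q := qbar0 theta S) in *. set (q' := qbar0 theta (m :: R0)) in *.
  rewrite (lsum_remove _ k S Hk Hnd) in Eq. rewrite lsum_cons in Eq'. fold R0 in Eq.
  destruct (Rle_lt_dec q' q) as [| Hlt]; [assumption |].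
  assert (demand q (theta k) <= demand q' (theta m)) by (apply demand_monotone; lra).
  assert (lsum (fun i => demand q (theta i)) R0 <= lsum (fun i => demand q' (theta i)) R0)
    by (apply lsum_le; intros; apply demand_monotone; lra).
  lra.
Qed.

Lemma re_exchange theta S k m :
  NoDup S -> In k S -> (forall j, In j S -> theta j <= theta k) -> theta k <= theta m ->
  re theta S <= re theta (m :: remove Nat.eq_dec k S).
Proof.
  intros Hnd Hk Htop Hkm. set (R0 := remove Nat.eq_dec k S).
  assert (HS : S <> []) by (intros ->; contradiction).
  assert (Hqq : qbar0 theta (m :: R0) <= qbar0 theta S) by now apply qbar0_exchange.
  destruct (qbar0_spec theta S HS) as [Hq Eq].
  destruct (qbar0_spec theta (m :: R0) ltac:(discriminate)) as [Hq' Eq'].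
  set (q := qbar0 theta S) in *. set (q' := qbar0 theta (m :: R0)) in *.
  rewrite (lsum_remove _ k S Hk Hnd) in Eq. rewrite lsum_cons in Eq'. fold R0 in Eq.
  assert (Hlosers : forall j, In j R0 ->
    demand q' (theta j) <= demand q (theta j) <= demand q (theta k)).
  { intros j Hj. apply in_remove in Hj.
    split; apply demand_monotone; try lra; apply Htop; tauto. }
  assert (Hlost : lsum (fun i => demand q' (theta i)) R0 <= lsum (fun i => demand q (theta i)) R0)
    by (apply lsum_le; intros j Hj; apply Hlosers, Hj).
  pose proof (demand_bounds q' (theta m) (proj1 Hq')).
  rewrite (re_nonempty theta S HS), (re_nonempty theta (m :: R0)) by discriminate.
  fold q q'. rewrite (lsum_remove _ k S Hk Hnd), lsum_cons. fold R0.
  apply (odds_exchange _ _ (fun j => demand q (theta j)) (fun j => demand q' (theta j)));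
    [lra | lra | exact Hlosers | lra].
Qed.

Lemma NoDup_remove_any {A : Type} (dec : forall x y : A, {x = y} + {x <> y}) a L :
  NoDup L -> NoDup (remove dec a L).
Proof.
  induction L as [| b L IH]; simpl; intros H; [constructor |]. inversion H; subst.
  destruct (dec a b); [auto |]. constructor; [| auto].
  intros Hin. apply in_remove in Hin. tauto.
Qed.

Lemma list_min L : L <> [] -> exists m, In m L /\ forall j, In j L -> (m <= j)%nat.
Proof.
  induction L as [| a [| b L'] IH]; intros H; [congruence | |].
  - exists a. split; [now left |]. intros j [<- | []]; lia.
  - destruct IH as [m [Hm Hj]]; [discriminate |].
    destruct (le_lt_dec a m).
    + exists a. split; [now left |].
      intros j [<- | Hj']; [lia |]. specialize (Hj j Hj'). lia.
    + exists m. split; [now right |]. intros j [<- | Hj']; [lia | auto].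
Qed.

Fixpoint lists_upto (m k : nat) : list (list nat) :=
  match k with
  | O => [[]]
  | S k' => [] :: flat_map (fun i => map (cons i) (lists_upto m k')) (seq 1 m)
  end.

Lemma lists_upto_complete m k U : (length U <= k)%nat ->
  (forall i, In i U -> In i (seq 1 m)) -> In U (lists_upto m k).
Proof.
  revert U. induction k as [| k IH]; intros [| x U] HU Hi; simpl in *; auto; try lia.
  right. apply in_flat_map. exists x. split; auto. apply in_map, IH; [lia | auto].
Qed.

Lemma argmax_in (P : list nat -> Prop) (r : list nat -> R) C :
  (exists x, In x C /\ P x) -> exists T, P T /\ forall U, In U C -> P U -> r U <= r T.
Proof.
  induction C as [| a C IH]; intros [x [Hx Px]]; [destruct Hx |].
  destruct (classic (exists y, In y C /\ P y)) as [Hy | Hy].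
  - destruct (IH Hy) as [T [PT HT]].
    destruct (classic (P a /\ r T < r a)) as [Ha | Ha].
    + exists a. split; [tauto |]. intros U [<- | HU] PU; [lra |].
      specialize (HT U HU PU). lra.
    + exists T. split; auto. intros U [<- | HU] PU; auto.
      destruct (Rle_lt_dec (r a) (r T)); [assumption | tauto].
  - exists a. destruct Hx as [<- | Hx]; [| exfalso; eauto].
    split; auto. intros U [<- | HU] PU; [lra | exfalso; eauto].
Qed.

(* A displayed set has no repetitions, hence at most [n] entries. *)
Lemma displayed_finite n U : displayed n U -> In U (lists_upto n n).
Proof.
  intros [Hnd Hrange].
  assert (Hincl : incl U (seq 1 n)) by (intros i Hi; apply in_seq; apply Hrange in Hi; lia).
  apply lists_upto_complete; [| exact Hincl].
  pose proof (NoDup_incl_length Hnd Hincl). rewrite length_seq in *. lia.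
Qed.

Lemma optimal_displayed_exists n theta :
  exists T, displayed n T /\ forall U, displayed n U -> re theta U <= re theta T.
Proof.
  destruct (argmax_in (displayed n) (re theta) (lists_upto n n)) as [T [HT Hmax]].
  - exists []. split; [destruct n; now left | split; [constructor | intros _ []]].
  - exists T. split; [assumption |]. intros U HU. apply Hmax; [apply displayed_finite |]; assumption.
Qed.

Lemma displayed_swap_in_1 n S k : displayed n S -> ~ In 1%nat S -> (1 <= n)%nat ->
  displayed n (1%nat :: remove Nat.eq_dec k S).
Proof.
  intros [Hnd Hrange] H1 Hn. split.
  - constructor; [intros Hin; apply in_remove in Hin; tauto | now apply NoDup_remove_any].
  - intros i [<- | Hi]; [lia |]. apply in_remove in Hi. apply Hrange; tauto.
Qed.

Section Monotone_qualities.

Variables (n : nat) (theta : nat -> R).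
Hypothesis Hmono : forall i j : nat, (1 <= i)%nat -> (i <= j)%nat -> (j <= n)%nat ->
  theta j <= theta i.

Lemma re_swap_in_1 S k : displayed n S -> In k S -> (forall j, In j S -> (k <= j)%nat) ->
  re theta S <= re theta (1%nat :: remove Nat.eq_dec k S).
Proof.
  intros HS Hk Hmin. destruct HS as [Hnd Hrange]. pose proof (Hrange k Hk).
  apply re_exchange; [assumption | assumption | |].
  - intros j Hj. pose proof (Hrange j Hj). apply Hmono; [lia | auto | lia].
  - apply Hmono; lia.
Qed.

Lemma improve_with_1 T : displayed n T -> ~ In 1%nat T -> (1 <= n)%nat ->
  exists T', displayed n T' /\ In 1%nat T' /\ re theta T <= re theta T'.
Proof.
  intros HT H1 Hn. destruct T as [| t T0] eqn:ET.
  - exists [1%nat]. split; [exact (displayed_swap_in_1 n [] 0%nat HT H1 Hn) |].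
    split; [now left |]. change (re theta []) with 0. apply re_nonneg.
  - rewrite <- ET in *.
    destruct (list_min T) as [m [Hm Hmin]]; [rewrite ET; discriminate |].
    exists (1%nat :: remove Nat.eq_dec m T).
    split; [now apply displayed_swap_in_1 |].
    split; [now left | now apply re_swap_in_1].
Qed.

End Monotone_qualities.

Theorem lemma4 (n : nat) (theta : nat -> R)
  (Hmono : forall i j : nat, (1 <= i)%nat -> (i <= j)%nat -> (j <= n)%nat -> theta j <= theta i)
  (Hnonneg : forall i : nat, (1 <= i <= n)%nat -> 0 <= theta i)
  (S : list nat) (istar : nat)
  (HS : displayed n S) (Hne : S <> []) (H1 : ~ In 1%nat S)
  (Histar : In istar S) (Hmin : forall j, In j S -> (istar <= j)%nat) :
  re theta (1%nat :: remove Nat.eq_dec istar S) >= re theta S /\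
  exists T : list nat, displayed n T /\ In 1%nat T /\
    forall U : list nat, displayed n U -> re theta U <= re theta T.
Proof.
  split; [apply Rle_ge; now apply (re_swap_in_1 n theta Hmono) |].
  assert (Hn : (1 <= n)%nat) by (destruct HS as [_ Hrange]; apply Hrange in Histar; lia).
  destruct (optimal_displayed_exists n theta) as [T [HT Hopt]].
  destruct (classic (In 1%nat T)) as [HT1 | HT1]; [now exists T |].
  destruct (improve_with_1 n theta Hmono T HT HT1 Hn) as [T' [HT' [HT'1 Hle]]].
  exists T'. split; [assumption |]. split; [assumption |].
  intros U HU. specialize (Hopt U HU). lra.
Qed.
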